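(* Let $G$ be a finite group, $F$ a field with $\operatorname{char}(F)\nmid|G|$, and $[\alpha]\in H^2(G,F^* )$. Then the semisimple algebra $F^\alpha G$ has a commutative simple component in its Wedderburn decomposition if and only if $[\alpha]$ lies in the image of the restriction to $\operatorname{Ext}(G/G',F^* )$ of the inflation map $H^2(G/G',F^* )\to H^2(G,F^* )$.
   Context: $H^2(X,F^* )$ is the second cohomology group with trivial action. For an abelian group $A$, $\operatorname{Ext}(A,F^* )$ is the subgroup of $H^2(A,F^* )$ consisting of classes represented by symmetric cocycles ($\beta(x,y)=\beta(y,x)$). The inflation map $H^2(G/G',F^* )\to H^2(G,F^* )$ sends the class of $\beta$ to the class of $(x,y)\mapsto\beta(xG',yG')$. For $\alpha\in Z^2(G,F^* )$ the twisted group algebra $F^\alpha G$ has $F$-basis $\{u_g\}$, $F$ central, $u_gu_h=\alpha(g,h)u_{gh}$. *)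

From HB Require Import structures.
From mathcomp Require Import all_boot all_order all_algebra all_fingroup all_solvable.
Set Implicit Arguments. Unset Strict Implicit. Unset Printing Implicit Defensive.
Import GRing.Theory.
Local Open Scope ring_scope.

(* The finite group G is the whole finGroupType gT (G = [set: gT]).      *)

Definition cocycle2 (gT : finGroupType) (F : fieldType) (a : gT -> gT -> F) : Prop :=
  (forall x y, a x y != 0) /\
  (forall x y z, a x y * a (x * y)%g z = a y z * a x (y * z)%g).

Definition cohomologous (gT : finGroupType) (F : fieldType) (a b : gT -> gT -> F) : Prop :=
  exists f : gT -> F, (forall x, f x != 0) /\
    (forall x y, b x y = f x * f y * (f (x * y)%g)^-1 * a x y).

Definition symmetric_cocycle (gT : finGroupType) (F : fieldType) (b : gT -> gT -> F) : Prop :=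
  cocycle2 b /\ forall x y, b x y = b y x.

(* The twisted group algebra F^a G: elements sum_g c_g u_g are represented by
   their coefficient functions c : {ffun gT -> F}; u_x u_y = a(x,y) u_{xy}. *)
Definition tw_mul (gT : finGroupType) (F : fieldType) (a : gT -> gT -> F)
    (u v : {ffun gT -> F}) : {ffun gT -> F} :=
  [ffun z => \sum_(x : gT) u x * v (x^-1 * z)%g * a x (x^-1 * z)%g].

Definition tw_central (gT : finGroupType) (F : fieldType) (a : gT -> gT -> F)
    (e : {ffun gT -> F}) : Prop :=
  forall u, tw_mul a e u = tw_mul a u e.

Definition tw_central_idem (gT : finGroupType) (F : fieldType) (a : gT -> gT -> F)
    (e : {ffun gT -> F}) : Prop :=
  tw_central a e /\ tw_mul a e e = e.

(* primitive central idempotent: nonzero central idempotent not a sum of two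
   nonzero orthogonal central idempotents, i.e. the only central idempotents
   below it (f = e f) are 0 and e. *)
Definition tw_primitive_central_idem (gT : finGroupType) (F : fieldType)
    (a : gT -> gT -> F) (e : {ffun gT -> F}) : Prop :=
  tw_central_idem a e /\ e != 0 /\
  forall f, tw_central_idem a f -> tw_mul a e f = f -> f = 0 \/ f = e.

(* The Wedderburn (simple) components of the semisimple algebra F^a G are the
   ideals e F^a G for the primitive central idempotents e. *)
Definition has_commutative_simple_component (gT : finGroupType) (F : fieldType)
    (a : gT -> gT -> F) : Prop :=
  exists e, tw_primitive_central_idem a e /\
    forall u v, tw_mul a (tw_mul a e u) (tw_mul a e v) = tw_mul a (tw_mul a e v) (tw_mul a e u).

Definition in_inflated_Ext (gT : finGroupType) (F : fieldType) (a : gT -> gT -> F) : Prop :=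
  exists b : coset_of ([set: gT]^`(1))%g -> coset_of ([set: gT]^`(1))%g -> F,
    symmetric_cocycle b /\
    cohomologous a (fun x y => b (coset ([set: gT]^`(1))%g x) (coset ([set: gT]^`(1))%g y)).

(* If [e] is a central idempotent with [e F^a G] commutative, then [g |-> e u_g] is a
   projective representation into a commutative algebra with identity [e].  Hence every
   commutator is sent to a scalar multiple of [e], i.e. [G'] acts by scalars, and after
   rescaling by constants [psi g] the images of coset representatives of [G'] multiply
   through a cocycle cohomologous to [a] that only depends on cosets and is symmetric.
   Conversely, if [a] is cohomologous to an inflated symmetric cocycle [b], rescale the
   basis to [v_g] with [v_g v_h = b(gG', hG') v_gh].  Averaging [v_d] over [d] in [G'] (which
   needs [char F] not dividing [|G'|]) gives a nonzero central idempotent whose ideal is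
   commutative, and any primitive central idempotent below it cuts out a commutative
   simple component. *)

From HB Require Import structures.
From mathcomp Require Import all_boot all_order all_algebra all_fingroup all_solvable.
From mathcomp Require Import ring.
From Stdlib Require Import Classical_Prop.
Set Implicit Arguments. Unset Strict Implicit. Unset Printing Implicit Defensive.
Import GRing.Theory.
Local Open Scope ring_scope.

Section Cocycles.
Variables (gT : finGroupType) (F : fieldType).

Lemma cocycle2_mulg1 (a : gT -> gT -> F) x : cocycle2 a -> a x 1%g = a 1%g 1%g.
Proof.
case=> a_nz a_co; have := a_co x 1%g 1%g; rewrite !mulg1 => E.
by apply: (mulIf (a_nz x 1%g)); rewrite E mulrC.
Qed.

Lemma cocycle2_mul1g (a : gT -> gT -> F) y : cocycle2 a -> a 1%g y = a 1%g 1%g.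
Proof.
case=> a_nz a_co; have := a_co 1%g 1%g y; rewrite !mul1g => E.
by apply: (mulIf (a_nz 1%g y)); rewrite -E mulrC.
Qed.

Lemma cohomologous_cocycle2 (a b : gT -> gT -> F) :
  cocycle2 a -> cohomologous a b -> cocycle2 b.
Proof.
case=> a_nz a_co [f [f_nz b_def]]; split=> [x y | x y z].
  by rewrite b_def !mulf_neq0 ?invr_eq0.
have nz := f_nz; rewrite !b_def.
transitivity (f x * f y * f z / f (x * y * z)%g * (a x y * a (x * y)%g z)).
  by field; rewrite ?nz.
by rewrite a_co mulgA; field; rewrite ?nz.
Qed.

End Cocycles.

Section DerivedQuotient.
Variable gT : finGroupType.
Local Notation N := ([set: gT]^`(1))%g.

Lemma der1_norm g : g \in 'N(N)%g.
Proof. exact: subsetP (der_norm 1 [set: gT]) g (in_setT g). Qed.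

Lemma coset_der1M g h : (coset N g * coset N h)%g = coset N (g * h).
Proof. by rewrite morphM ?der1_norm. Qed.

Lemma coset_der1C g h : coset N (g * h) = coset N (h * g).
Proof.
have : ([~ g^-1, h^-1] \in N)%g by rewrite derg1 mem_commg ?inE.
rewrite /commg /conjg !invgK !mulgA => gh_hg.
by apply/rcoset_kercosetP; rewrite ?der1_norm // mem_rcoset invMg !mulgA.
Qed.

End DerivedQuotient.

Section TwistedGroupAlgebra.
Variables (gT : finGroupType) (F : fieldType) (a : gT -> gT -> F).
Local Notation A := {ffun gT -> F}.
Local Notation "u ** v" := (tw_mul a u v) (at level 40, left associativity).

Definition tw_basis (g : gT) : A := [ffun z => (z == g)%:R].
Local Notation "''u_' g" := (tw_basis g) (at level 8, g at level 2).

Definition tw_scale (k : F) (u : A) : A := [ffun z => k * u z].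
Local Notation "k *s u" := (tw_scale k u) (at level 40).

Lemma tw_scaleA k l u : k *s (l *s u) = (k * l) *s u.
Proof. by apply/ffunP => z; rewrite !ffunE mulrA. Qed.

Lemma tw_scale0 u : 0 *s u = 0.
Proof. by apply/ffunP => z; rewrite !ffunE mul0r. Qed.

Lemma tw_scale1 u : 1 *s u = u.
Proof. by apply/ffunP => z; rewrite !ffunE mul1r. Qed.

Lemma tw_scale_sum k I (r : seq I) (P : pred I) (G : I -> A) :
  k *s (\sum_(i <- r | P i) G i) = \sum_(i <- r | P i) k *s G i.
Proof.
apply/ffunP => z; rewrite ffunE !sum_ffunE mulr_sumr.
by apply: eq_bigr => i _; rewrite ffunE.
Qed.

Lemma tw_scaleMn k u n : k *s (u *+ n) = (k * n%:R) *s u.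
Proof. by apply/ffunP => z; rewrite !ffunE ffunMnE -[RHS]mulrA mulr_natl. Qed.

Lemma tw_scaleIl k l u : u != 0 -> k *s u = l *s u -> k = l.
Proof.
move=> + E; apply: contraNeq => kl; apply/eqP/ffunP => z.
have /eqP := congr1 (fun f : A => f z) E; rewrite !ffunE.
by rewrite -subr_eq0 -mulrBl mulf_eq0 subr_eq0 (negbTE kl) => /eqP.
Qed.

Lemma tw_scaleI k u v : k != 0 -> k *s u = k *s v -> u = v.
Proof.
by move=> k_nz E; rewrite -(tw_scale1 u) -(tw_scale1 v) -(mulVf k_nz) -!tw_scaleA E.
Qed.

Lemma tw_basis_expansion (u : A) : u = \sum_g u g *s 'u_g.
Proof.
apply/ffunP => z; rewrite sum_ffunE (bigD1 z) //= big1 => [|g gz]; last first.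
  by rewrite !ffunE eq_sym (negbTE gz) mulr0.
by rewrite !ffunE eqxx mulr1 addr0.
Qed.

Lemma tw_mulDl u1 u2 v : (u1 + u2) ** v = u1 ** v + u2 ** v.
Proof.
by apply/ffunP => z; rewrite !ffunE -big_split; apply: eq_bigr => x _; rewrite ffunE /=; ring.
Qed.

Lemma tw_mulDr u v1 v2 : u ** (v1 + v2) = u ** v1 + u ** v2.
Proof.
by apply/ffunP => z; rewrite !ffunE -big_split; apply: eq_bigr => x _; rewrite ffunE /=; ring.
Qed.

Lemma tw_mulZl k u v : (k *s u) ** v = k *s (u ** v).
Proof. apply/ffunP => z; rewrite !ffunE mulr_sumr; apply: eq_bigr => x _; rewrite ffunE; ring. Qed.

Lemma tw_mulZr k u v : u ** (k *s v) = k *s (u ** v).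
Proof. apply/ffunP => z; rewrite !ffunE mulr_sumr; apply: eq_bigr => x _; rewrite ffunE; ring. Qed.

Lemma tw_mul0l v : 0 ** v = 0.
Proof. by apply/ffunP => z; rewrite !ffunE big1 // => x _; rewrite ffunE !mul0r. Qed.

Lemma tw_mul0r u : u ** 0 = 0.
Proof. by apply/ffunP => z; rewrite !ffunE big1 // => x _; rewrite ffunE mulr0 mul0r. Qed.

Lemma tw_mul_suml I (r : seq I) (P : pred I) (G : I -> A) v :
  (\sum_(i <- r | P i) G i) ** v = \sum_(i <- r | P i) G i ** v.
Proof.
exact: (big_morph (tw_mul a ^~ v) (fun u1 u2 => tw_mulDl u1 u2 v) (tw_mul0l v)).
Qed.

Lemma tw_mul_sumr I (r : seq I) (P : pred I) (G : I -> A) u :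
  u ** (\sum_(i <- r | P i) G i) = \sum_(i <- r | P i) u ** G i.
Proof. exact: (big_morph (tw_mul a u) (tw_mulDr u) (tw_mul0r u)). Qed.

Lemma tw_mul_basis g h : 'u_g ** 'u_h = a g h *s 'u_(g * h)%g.
Proof.
apply/ffunP => z; rewrite !ffunE (bigD1 g) //= big1 => [|x xg]; last first.
  by rewrite ffunE (negbTE xg) !mul0r.
rewrite !ffunE eqxx addr0 mul1r.
have [->|ne] := eqVneq z (g * h)%g; first by rewrite mulKg eqxx; ring.
suff /negbTE-> : (g^-1 * z)%g != h by rewrite !mulr0 mul0r.
by apply: contra_neq ne => <-; rewrite mulKVg.
Qed.

Lemma tw_comm_basis e :
    (forall g h, (e ** 'u_g) ** (e ** 'u_h) = (e ** 'u_h) ** (e ** 'u_g)) ->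
  forall u v, (e ** u) ** (e ** v) = (e ** v) ** (e ** u).
Proof.
move=> e_comm.
have e_comm_l g v : (e ** 'u_g) ** (e ** v) = (e ** v) ** (e ** 'u_g).
  rewrite (tw_basis_expansion v) !tw_mul_sumr tw_mul_suml; apply: eq_bigr => h _.
  by rewrite !tw_mulZr tw_mulZl e_comm.
move=> u v; rewrite (tw_basis_expansion u) !tw_mul_sumr tw_mul_suml.
by apply: eq_bigr => g _; rewrite !tw_mulZr tw_mulZl e_comm_l.
Qed.

Hypothesis a_cocycle : cocycle2 a.

Lemma cocycle_neq0 g h : a g h != 0.
Proof. exact: (proj1 a_cocycle). Qed.

Lemma tw_mulA u v w : (u ** v) ** w = u ** (v ** w).
Proof.
have basisA x y z : ('u_x ** 'u_y) ** 'u_z = 'u_x ** ('u_y ** 'u_z).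
  rewrite !tw_mul_basis tw_mulZl tw_mulZr !tw_mul_basis !tw_scaleA mulgA.
  by case: a_cocycle => _ ->.
rewrite (tw_basis_expansion u) !tw_mul_suml; apply: eq_bigr => x _.
rewrite !tw_mulZl; congr (_ *s _).
rewrite (tw_basis_expansion v) tw_mul_sumr !tw_mul_suml tw_mul_sumr.
apply: eq_bigr => y _; rewrite tw_mulZr !tw_mulZl tw_mulZr; congr (_ *s _).
rewrite (tw_basis_expansion w) !tw_mul_sumr; apply: eq_bigr => z _.
by rewrite !tw_mulZr basisA.
Qed.

Lemma tw_mul_basis1r u : u ** 'u_1 = a 1%g 1%g *s u.
Proof.
apply/ffunP => z; rewrite !ffunE (bigD1 z) //= big1 => [|x xz]; last first.
  by rewrite ffunE -eq_mulVg1 (negbTE xz) mulr0 mul0r.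
by rewrite ffunE mulVg eqxx mulr1 addr0 cocycle2_mulg1 // mulrC.
Qed.

Section CentralIdempotent.
Variable e : A.
Hypotheses (e_central : tw_central a e) (e_idem : e ** e = e).

Lemma tw_idem_mulKl u : e ** (e ** u) = e ** u.
Proof. by rewrite -tw_mulA e_idem. Qed.

Lemma tw_idem_mulKr u : (e ** u) ** e = e ** u.
Proof. by rewrite tw_mulA -e_central tw_idem_mulKl. Qed.

Lemma tw_idem_mul_basis g h : (e ** 'u_g) ** (e ** 'u_h) = a g h *s (e ** 'u_(g * h)%g).
Proof.
by rewrite tw_mulA -(tw_mulA 'u_g) -e_central tw_mulA tw_idem_mulKl tw_mul_basis tw_mulZr.
Qed.

End CentralIdempotent.

Local Notation N := ([set: gT]^`(1))%g.

Section CommutativeComponent.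
Variable e : A.
Hypotheses (e_central : tw_central a e) (e_idem : e ** e = e).
Hypothesis e_comm : forall u v, (e ** u) ** (e ** v) = (e ** v) ** (e ** u).
Variable z0 : gT.
Hypothesis e_z0 : e z0 != 0.

Local Notation eu g := (e ** 'u_g).
Local Notation eu_mul := (tw_idem_mul_basis e_central e_idem).

(* The coefficient [k] of [r = k *s e], read off at a point where [e] does not vanish. *)
Definition e_coord (r : A) := r z0 / e z0.

Lemma e_coordE k : e_coord (k *s e) = k.
Proof. by rewrite /e_coord ffunE mulfK. Qed.

Lemma eu_inv_mul g : eu g^-1 ** eu g = (a g^-1 g * a 1%g 1%g) *s e.
Proof. by rewrite eu_mul mulVg tw_mul_basis1r tw_scaleA. Qed.

Lemma eu_neq0 g : eu g != 0.
Proof.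
have e_nz : e != 0 by apply: contraNneq e_z0 => ->; rewrite ffunE.
apply/eqP => eu0; have := eu_inv_mul g; rewrite eu0 tw_mul0r -(tw_scale0 e).
by move/esym/(tw_scaleIl e_nz)/eqP; rewrite mulf_eq0 !(negbTE (cocycle_neq0 _ _)).
Qed.

Lemma eu_mulI g r s : e ** r = r -> e ** s = s -> eu g ** r = eu g ** s -> r = s.
Proof.
move=> er es /(congr1 (tw_mul a (eu g^-1))).
rewrite -(tw_mulA (eu g^-1) (eu g)) -(tw_mulA (eu g^-1) (eu g)) eu_inv_mul !tw_mulZl er es.
by apply: tw_scaleI; rewrite mulf_neq0 ?cocycle_neq0.
Qed.

Definition scalar_elts := [set d | eu d == e_coord (eu d) *s e].

Lemma scalar_eltsP d : reflect (exists k, eu d = k *s e) (d \in scalar_elts).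
Proof.
rewrite inE; apply: (iffP eqP) => [dE | [k dE]]; first by exists (e_coord (eu d)).
by rewrite dE e_coordE.
Qed.

Lemma scalar_elts_group : group_set scalar_elts.
Proof.
apply/group_setP; split.
  by apply/scalar_eltsP; exists (a 1%g 1%g); rewrite tw_mul_basis1r.
move=> x y /scalar_eltsP[k xE] /scalar_eltsP[l yE]; apply/scalar_eltsP.
exists (k * l / a x y); apply: (tw_scaleI (cocycle_neq0 x y)).
rewrite -eu_mul xE yE tw_mulZl tw_mulZr e_idem !tw_scaleA; congr (_ *s _).
by rewrite [RHS]mulrC mulfVK ?cocycle_neq0.
Qed.

Lemma commg_scalar_elts x y : [~ x, y]%g \in scalar_elts.
Proof.
set w := (y * x)%g; have xyE : (x * y = w * [~ x, y])%g by rewrite commgC.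
have eu_xy : eu (x * y)%g = (a y x / a x y) *s eu w.
  apply: (tw_scaleI (cocycle_neq0 x y)); rewrite -eu_mul e_comm eu_mul tw_scaleA.
  by congr (_ *s _); rewrite mulrC mulfVK ?cocycle_neq0.
apply/scalar_eltsP; exists (a w [~ x, y] * (a y x / a x y)).
apply: (@eu_mulI w); [exact: tw_idem_mulKl | by rewrite tw_mulZr e_idem |].
by rewrite eu_mul -xyE eu_xy tw_mulZr tw_idem_mulKr // tw_scaleA.
Qed.

Lemma der1_sub_scalar_elts : N \subset scalar_elts.
Proof.
have -> : scalar_elts = Group scalar_elts_group by [].
rewrite derg1 gen_subG; apply/subsetP => _ /imset2P[x y _ _ ->].
exact: commg_scalar_elts.
Qed.

Definition coset_rep g := repr (coset N g).

Lemma coset_rep_eq g h : coset N g = coset N h -> coset_rep g = coset_rep h.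
Proof. by rewrite /coset_rep => ->. Qed.

Lemma coset_rep_mem g : (g * (coset_rep g)^-1)%g \in N.
Proof.
rewrite -mem_rcoset; apply/rcoset_kercosetP; rewrite ?der1_norm //.
exact/esym/coset_reprK.
Qed.

Definition rep_scalar g :=
  let n := (g * (coset_rep g)^-1)%g in e_coord (eu n) / a n (coset_rep g).

Lemma eu_coset_rep g : eu g = rep_scalar g *s eu (coset_rep g).
Proof.
rewrite /rep_scalar; set t := coset_rep g; set n := (g * t^-1)%g.
have /scalar_eltsP[k nE] := subsetP der1_sub_scalar_elts n (coset_rep_mem g).
have ntE : (n * t)%g = g by rewrite mulgKV.
have := eu_mul n t; rewrite nE tw_mulZl tw_idem_mulKl // ntE => tE.
apply: (tw_scaleI (cocycle_neq0 n t)); rewrite -tE e_coordE tw_scaleA.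
by congr (_ *s _); rewrite mulrC mulfVK ?cocycle_neq0.
Qed.

Lemma rep_scalar_neq0 g : rep_scalar g != 0.
Proof. by apply: contra_neq (eu_neq0 g) => psi0; rewrite eu_coset_rep psi0 tw_scale0. Qed.

Definition adj_cocycle g h := a g h * rep_scalar (g * h)%g / (rep_scalar g * rep_scalar h).

Lemma eu_coset_rep_mul g h :
  eu (coset_rep g) ** eu (coset_rep h) = adj_cocycle g h *s eu (coset_rep (g * h)%g).
Proof.
have := eu_mul g h; rewrite (eu_coset_rep g) (eu_coset_rep h) (eu_coset_rep (g * h)%g).
rewrite tw_mulZl tw_mulZr !tw_scaleA => E.
apply: (tw_scaleI (mulf_neq0 (rep_scalar_neq0 g) (rep_scalar_neq0 h))).
rewrite E tw_scaleA; congr (_ *s _).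
by rewrite /adj_cocycle; field; rewrite !rep_scalar_neq0.
Qed.

Lemma adj_cocycle_coset g h g' h' : coset N g = coset N g' -> coset N h = coset N h' ->
  adj_cocycle g h = adj_cocycle g' h'.
Proof.
move=> gE hE; have ghE : coset N (g * h) = coset N (g' * h').
  by rewrite -!coset_der1M gE hE.
apply: (tw_scaleIl (eu_neq0 (coset_rep (g * h)%g))).
rewrite -eu_coset_rep_mul (coset_rep_eq gE) (coset_rep_eq hE) (coset_rep_eq ghE).
exact: eu_coset_rep_mul.
Qed.

Lemma adj_cocycleC g h : adj_cocycle g h = adj_cocycle h g.
Proof.
apply: (tw_scaleIl (eu_neq0 (coset_rep (g * h)%g))).
by rewrite -eu_coset_rep_mul e_comm (coset_rep_eq (coset_der1C g h)) eu_coset_rep_mul.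
Qed.

Lemma comm_idem_in_inflated_Ext : in_inflated_Ext a.
Proof.
have adj_cohom : cohomologous a adj_cocycle.
  exists (fun g => (rep_scalar g)^-1); split=> [g | g h].
    by rewrite invr_eq0 rep_scalar_neq0.
  by rewrite /adj_cocycle invrK; field; rewrite !rep_scalar_neq0.
have [adj_neq0 adj_co] := cohomologous_cocycle2 a_cocycle adj_cohom.
pose b x y := adj_cocycle (repr x) (repr y).
have bE g h : b (coset N g) (coset N h) = adj_cocycle g h.
  by apply: adj_cocycle_coset; rewrite coset_reprK.
exists b; split; last first.
  by case: adj_cohom => f [f_nz adjE]; exists f; split=> // g h; rewrite bE.
split; last by move=> x y; rewrite /b adj_cocycleC.
split=> [x y | x y z]; first exact: adj_neq0.
rewrite -(coset_reprK x) -(coset_reprK y) -(coset_reprK z) !coset_der1M !bE.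
exact: adj_co.
Qed.

End CommutativeComponent.

Definition tw_row (u : A) : 'rV[F]_#|gT| := \row_i u (enum_val i).

(* Its rows span the ideal [e F^a G], so its rank is the dimension of that ideal. *)
Definition ideal_mx (e : A) : 'M[F]_#|gT| :=
  \matrix_(i, j) (e ** 'u_(enum_val i)) (enum_val j).

Lemma tw_row_sum I (r : seq I) (P : pred I) (G : I -> A) :
  tw_row (\sum_(i <- r | P i) G i) = \sum_(i <- r | P i) tw_row (G i).
Proof.
have tw_rowD u v : tw_row (u + v) = tw_row u + tw_row v.
  by apply/rowP => i; rewrite !mxE ffunE.
have tw_row0 : tw_row 0 = 0 by apply/rowP => i; rewrite !mxE ffunE.
exact: (big_morph tw_row tw_rowD tw_row0).
Qed.

Lemma tw_rowZ k u : tw_row (k *s u) = k *: tw_row u.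
Proof. by apply/rowP => i; rewrite !mxE ffunE. Qed.

Lemma row_ideal_mx e i : row i (ideal_mx e) = tw_row (e ** 'u_(enum_val i)).
Proof. by apply/rowP => j; rewrite !mxE. Qed.

Lemma ideal_mxP e u : reflect (exists x, u = e ** x) (tw_row u <= ideal_mx e)%MS.
Proof.
apply: (iffP idP) => [/submxP[w uE] | [x ->]].
  exists (\sum_i w 0 i *s 'u_(enum_val i)); apply/ffunP => z.
  have := congr1 (fun M : 'rV_#|gT| => M 0 (enum_rank z)) uE.
  rewrite /= mxE enum_rankK => ->; rewrite mxE tw_mul_sumr sum_ffunE.
  by apply: eq_bigr => i _; rewrite tw_mulZr ffunE mxE enum_rankK.
rewrite (tw_basis_expansion x) tw_mul_sumr tw_row_sum; apply: summx_sub => g _.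
rewrite tw_mulZr tw_rowZ; apply: scalemx_sub.
by rewrite -[g]enum_rankK -row_ideal_mx row_sub.
Qed.

Lemma ideal_mxS e f : e ** f = f -> (ideal_mx f <= ideal_mx e)%MS.
Proof.
move=> ef; apply/row_subP => i; rewrite row_ideal_mx.
by apply/ideal_mxP; exists (f ** 'u_(enum_val i)); rewrite -tw_mulA ef.
Qed.

Lemma rank_ideal_mx_lt e f : tw_central_idem a e -> tw_central_idem a f ->
  e ** f = f -> f != e -> (\rank (ideal_mx f) < \rank (ideal_mx e))%N.
Proof.
move=> [e_central e_idem] [_ f_idem] ef; apply: contraNT; rewrite -leqNgt => rank_le.
have sEF : (ideal_mx e <= ideal_mx f)%MS.
  by rewrite -(geq_leqif (mxrank_leqif_sup (ideal_mxS ef))).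
have /ideal_mxP[x eE] : (tw_row e <= ideal_mx f)%MS.
  by apply: submx_trans sEF; apply/ideal_mxP; exists e; rewrite e_idem.
by apply/eqP; rewrite -ef e_central eE -tw_mulA f_idem.
Qed.

Lemma primitive_central_idem_below e : tw_central_idem a e -> e != 0 ->
  exists2 e0, tw_primitive_central_idem a e0 & e ** e0 = e0.
Proof.
move: {2}(\rank (ideal_mx e)).+1 (ltnSn (\rank (ideal_mx e))) => n.
elim: n e => // n IH e rank_e e_ci e_nz.
have [[f [f_ci ef f_nz f_ne]] | no_smaller] := classic (exists f,
  [/\ tw_central_idem a f, e ** f = f, f != 0 & f != e]).
  have rank_f := leq_trans (rank_ideal_mx_lt e_ci f_ci ef f_ne) rank_e.
  have [e0 e0_prim fe0] := IH f rank_f f_ci f_nz.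
  by exists e0; rewrite // -fe0 -tw_mulA ef.
exists e; last by case: e_ci.
split=> //; split=> // f f_ci ef.
have [-> | f_nz] := eqVneq f 0; first by left.
have [-> | f_ne] := eqVneq f e; first by right.
by case: no_smaller; exists f.
Qed.

Section AveragingIdempotent.
Variables (b : coset_of N -> coset_of N -> F) (f : gT -> F).
Hypotheses (b_cocycle : cocycle2 b) (b_sym : forall x y, b x y = b y x).
Hypothesis f_neq0 : forall g, f g != 0.
Hypothesis b_inflE :
  forall g h, b (coset N g) (coset N h) = f g * f h * (f (g * h)%g)^-1 * a g h.
Hypothesis N_unit : (#|N|%:R : F) != 0.

Definition tw_basis_adj g := f g *s 'u_g.
Local Notation "''v_' g" := (tw_basis_adj g) (at level 8, g at level 2).

(* On [G'] the rescaled basis multiplies through the constant [b 1 1]; hence the normalization. *)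
Definition avg_idem := (#|N|%:R * b 1%g 1%g)^-1 *s \sum_(d in N) 'v_d.

Lemma tw_mul_basis_adj g h : 'v_g ** 'v_h = b (coset N g) (coset N h) *s 'v_(g * h)%g.
Proof.
rewrite /tw_basis_adj tw_mulZl tw_mulZr tw_mul_basis !tw_scaleA b_inflE.
by congr (_ *s _); field; rewrite f_neq0.
Qed.

Lemma b_der1l d y : d \in N -> b (coset N d) y = b 1%g 1%g.
Proof. by move=> dN; rewrite coset_id // cocycle2_mul1g. Qed.

Lemma avg_idem_mul g :
  avg_idem ** 'v_g = (#|N|%:R)^-1 *s \sum_(d in N) 'v_(d * g)%g.
Proof.
have b11_nz : b 1%g 1%g != 0 by case: b_cocycle.
rewrite tw_mulZl tw_mul_suml tw_scale_sum.
under eq_bigr => d dN do rewrite tw_mul_basis_adj b_der1l // tw_scaleA.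
by rewrite -tw_scale_sum invfM -mulrA mulVf ?mulr1.
Qed.

Lemma mul_avg_idem g :
  'v_g ** avg_idem = (#|N|%:R)^-1 *s \sum_(d in N) 'v_(g * d)%g.
Proof.
have b11_nz : b 1%g 1%g != 0 by case: b_cocycle.
rewrite tw_mulZr tw_mul_sumr tw_scale_sum.
under eq_bigr => d dN do rewrite tw_mul_basis_adj b_sym b_der1l // tw_scaleA.
by rewrite -tw_scale_sum invfM -mulrA mulVf ?mulr1.
Qed.

Lemma avg_idem_central : tw_central a avg_idem.
Proof.
move=> u; rewrite (tw_basis_expansion u) tw_mul_suml tw_mul_sumr; apply: eq_bigr => g _.
have gE : 'u_g = (f g)^-1 *s 'v_g by rewrite tw_scaleA mulVf ?tw_scale1.
rewrite tw_mulZl tw_mulZr gE tw_mulZl tw_mulZr avg_idem_mul mul_avg_idem.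
congr (_ *s (_ *s (_ *s _))); rewrite [RHS](reindex_inj (conjg_inj g)) /=; apply: eq_big => d.
  by rewrite memJ_norm ?der1_norm.
by rewrite conjgE mulKVg.
Qed.

Lemma avg_idem_idem : avg_idem ** avg_idem = avg_idem.
Proof.
rewrite {1}/avg_idem tw_mulZl tw_mul_suml.
rewrite (eq_bigr (fun _ => (#|N|%:R)^-1 *s \sum_(d in N) 'v_d)) => [|d dN]; last first.
  rewrite mul_avg_idem (reindex_inj (mulgI d^-1)%g) /=; congr (_ *s _).
  by apply: eq_big => [d' | d' _]; rewrite ?groupMl ?groupV // mulKVg.
by rewrite sumr_const tw_scaleMn tw_scaleA mulfK.
Qed.

Lemma avg_idem_neq0 : avg_idem != 0.
Proof.
have b11_nz : b 1%g 1%g != 0 by case: b_cocycle.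
apply/eqP => /ffunP/(_ 1%g); rewrite !ffunE sum_ffunE (bigD1 1%g) ?group1 //= big1.
  rewrite !ffunE eqxx mulr1 addr0 => /eqP.
  by rewrite !mulf_eq0 invr_eq0 mulf_eq0 (negbTE N_unit) (negbTE b11_nz) (negbTE (f_neq0 _)).
by move=> d /andP[_ d1]; rewrite !ffunE eq_sym (negbTE d1) mulr0.
Qed.

Lemma avg_idem_mul_coset g h : coset N g = coset N h -> avg_idem ** 'v_g = avg_idem ** 'v_h.
Proof.
move/(rcoset_kercosetP (der1_norm g) (der1_norm h))/rcosetP => [n nN ->].
rewrite !avg_idem_mul (reindex_inj (mulIg n^-1)%g) /=; congr (_ *s _).
by apply: eq_big => [d | d _]; rewrite ?groupMr ?groupV // mulgA mulgKV.
Qed.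

Lemma avg_idem_comm u v :
  (avg_idem ** u) ** (avg_idem ** v) = (avg_idem ** v) ** (avg_idem ** u).
Proof.
apply: tw_comm_basis => g h.
have uE x : avg_idem ** 'u_x = (f x)^-1 *s (avg_idem ** 'v_x).
  by rewrite tw_mulZr tw_scaleA mulVf ?tw_scale1.
rewrite !(tw_idem_mul_basis avg_idem_central avg_idem_idem) !uE !tw_scaleA.
rewrite (avg_idem_mul_coset (coset_der1C g h)); congr (_ *s _).
have := b_sym (coset N g) (coset N h); rewrite !b_inflE => E.
apply: (mulfI (mulf_neq0 (f_neq0 g) (f_neq0 h))).
transitivity (f g * f h * (f (g * h)%g)^-1 * a g h); first by ring.
by rewrite E; ring.
Qed.

End AveragingIdempotent.

End TwistedGroupAlgebra.

Theorem proposition2p3 (gT : finGroupType) (F : fieldType) (a : gT -> gT -> F) :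
  [pchar F]^'.-nat #|gT|%N ->
  cocycle2 a ->
  has_commutative_simple_component a <-> in_inflated_Ext a.
Proof.
move=> pchar_nat a_cocycle; split.
  case=> e [[[e_central e_idem] [e_nz _]] e_comm].
  have /existsP[z0 e_z0] : [exists z, e z != 0].
    apply: contraNT e_nz => /existsPn e0; apply/eqP/ffunP => z.
    by rewrite ffunE; apply/eqP/negPn/e0.
  exact: (comm_idem_in_inflated_Ext a_cocycle e_central e_idem e_comm e_z0).
case=> b [[b_cocycle b_sym] [f [f_neq0 b_inflE]]].
have N_unit : (#|[set: gT]^`(1)%g|%:R : F) != 0.
  by rewrite natf_neq0_pchar; apply: pnat_dvd pchar_nat; rewrite -cardsT cardSg ?subsetT.
have avg_ci : tw_central_idem a (avg_idem b f).
  by split; [apply: avg_idem_central | apply: avg_idem_idem].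
have [e0 e0_prim avg_e0] :=
  primitive_central_idem_below a_cocycle avg_ci (avg_idem_neq0 b_cocycle f_neq0 N_unit).
exists e0; split=> // u v.
have e0E w : tw_mul a e0 w = tw_mul a (avg_idem b f) (tw_mul a e0 w).
  by rewrite -tw_mulA // avg_e0.
by rewrite (e0E u) (e0E v) avg_idem_comm.
Qed.
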